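(* For all $m,n\ge1$, $$F_{m+1}(x,y,q)F_{n+1}(xq^m,yq^m,q)=xq^mF_{m+n+1}(x,y,q)+y^2q^{2m-1}F_{m-1}(x,y,q)F_{n-1}(xq^{m+2},yq^{m+2},q).$$
   Context: $\Pi_n(13/2,123)$ is the set of layered matchings of $[n]$: set partitions whose blocks are consecutive intervals $[1,i_1]/\dots/[i_{k-1}+1,n]$, each of size $1$ or $2$. $\Pi_0(13/2,123)$ consists of the empty partition. For $\pi=B_1/\dots/B_k$ with $\min B_1<\dots<\min B_k$, $rb(\pi)$ is the number of pairs $(b,B_j)$ with $b\in B_i$, $j>i$, $\max B_j>b$. Let $s(\pi)$ and $d(\pi)$ be the numbers of blocks of size $1$ and $2$. Define $F_n(x,y,q)=\sum_{\pi\in\Pi_n(13/2,123)}x^{s(\pi)}y^{d(\pi)}q^{rb(\pi)}$, so $F_0=1$ and $F_1=x$. $F_n(xq^a,yq^a,q)$ denotes the substitution $x\mapsto xq^a$, $y\mapsto yq^a$. *)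

From HB Require Import structures.
From mathcomp Require Import all_boot all_order all_algebra.
Set Implicit Arguments. Unset Strict Implicit. Unset Printing Implicit Defensive.
Import GRing.Theory.

(* A set partition is represented as the list of its blocks B_1, ..., B_k,
   each block a list of elements of [n] = {1..n}, listed so that
   min B_1 < ... < min B_k. *)

Fixpoint comps12 (n : nat) : seq (seq nat) :=
  match n with
  | 0 => [:: [::]]
  | 1 => [:: [:: 1]]
  | (k.+1 as n').+1 =>
      [seq 1 :: c | c <- comps12 n'] ++ [seq 2 :: c | c <- comps12 k]
  end.

Fixpoint blocks_of (start : nat) (c : seq nat) : seq (seq nat) :=
  match c with
  | [::] => [::]
  | k :: c' => iota start k :: blocks_of (start + k) c'
  end.

(* Pi_n(13/2,123): layered matchings of [n]. *)
Definition layered (n : nat) : seq (seq (seq nat)) :=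
  [seq blocks_of 1 c | c <- comps12 n].

Definition maxB (B : seq nat) : nat := \max_(b <- B) b.

Definition rb (p : seq (seq nat)) : nat :=
  \sum_(i <- iota 0 (size p))
    \sum_(b <- nth [::] p i)
      count (fun j => b < maxB (nth [::] p j)) (iota i.+1 (size p - i.+1)).

Definition nsingles (p : seq (seq nat)) : nat := count (fun B => size B == 1) p.
Definition ndoubles (p : seq (seq nat)) : nat := count (fun B => size B == 2) p.

Definition F (R : comRingType) (n : nat) (x y q : R) : R :=
  (\sum_(p <- layered n) x ^+ nsingles p * y ^+ ndoubles p * q ^+ rb p)%R.

From mathcomp Require Import all_boot all_order all_algebra ring zify.
Import GRing.Theory.
Set Implicit Arguments.
Unset Strict Implicit.

(* A layered matching of [n] is determined by its composition c of n into
   parts 1 and 2 (the block sizes, left to right).  For such blocks the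
   statistic rb only counts, for every element b of a block, the later
   blocks, all of which end after b; so a block of size k followed by l
   blocks contributes k * l.  Hence F_n is a sum over compositions of the
   weight x^#1 y^#2 q^(sum of k_i * #(later blocks)), and splitting off the
   first part gives the recurrence
       F_{n+2}(x,y) = x F_{n+1}(xq,yq) + y F_n(xq^2,yq^2),  F_0 = 1, F_1 = x.
   The theorem is then pure algebra on the shifted family
   G_a(n) = F_n(xq^a, yq^a): cutting a matching between positions m+1 and
   m+2 (either no block straddles the cut, or a double block does) yields a
   concatenation identity, and two instances of it together with the
   recurrence give the stated formula. *)

Lemma count_nth_shift (P : pred (seq nat)) B p :
  count (fun j => P (nth [::] (B :: p) j)) (iota 1 (size p)) = count P p.
Proof.
rewrite (iotaDl 1 0) count_map.
have -> : count (preim S (fun j => P (nth [::] (B :: p) j))) (iota 0 (size p))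
        = count P (mkseq (nth [::] p) (size p)) by rewrite /mkseq count_map.
by rewrite mkseq_nth.
Qed.

Lemma rb_cons B p :
  rb (B :: p) = (\sum_(b <- B) count (fun C => b < maxB C) p + rb p)%N.
Proof.
rewrite /rb /= big_cons subn1 /=; congr (_ + _)%N.
  by apply: eq_bigr => b _; exact: (count_nth_shift (fun C => b < maxB C)).
rewrite (iotaDl 1 0) big_map; apply: eq_bigr => i _ /=.
apply: eq_bigr => b _.
by rewrite subSS -[i.+2]add1n iotaDl count_map.
Qed.

(* The value of rb on consecutive interval blocks with sizes c:
   a part k followed by l further parts contributes k * l. *)
Fixpoint rb_comp (c : seq nat) : nat :=
  if c is k :: c' then (k * size c' + rb_comp c')%N else 0%N.

Lemma size_blocks_of t c : size (blocks_of t c) = size c.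
Proof. by elim: c t => //= k c IH t; rewrite IH. Qed.

Lemma maxB_blocks_of t c : all (fun k => 0 < k) c ->
  forall C, C \in blocks_of t c -> t <= maxB C.
Proof.
elim: c t => //= k c IH t /andP [k_gt0 c_pos] C.
rewrite inE => /orP [/eqP -> | C_in].
  apply: (@leq_bigmax_seq _ (iota t k) predT id t) => //.
  by rewrite mem_iota leqnn /= -{1}[t]addn0 ltn_add2l.
exact: leq_trans (leq_addr k t) (IH _ c_pos C C_in).
Qed.

Lemma rb_blocks_of s c : all (fun k => 0 < k) c -> rb (blocks_of s c) = rb_comp c.
Proof.
elim: c s => [s _|k c IH s /andP [_ c_pos]]; first by rewrite /rb /= big_nil.
rewrite /= rb_cons IH //; congr (_ + _)%N.
rewrite big_seq (eq_bigr (fun _ => size c)).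
  by rewrite -big_seq big_const_seq count_predT size_iota iter_addn_0 mulnC.
move=> b; rewrite mem_iota => /andP [_ b_lt].
have : all (fun C => b < maxB C) (blocks_of (s + k) c).
  by apply/allP => C C_in; exact: leq_trans b_lt (maxB_blocks_of c_pos C_in).
by rewrite all_count size_blocks_of => /eqP.
Qed.

Lemma nsingles_blocks_of s c : nsingles (blocks_of s c) = count (pred1 1%N) c.
Proof. by elim: c s => //= k c IH s; rewrite IH size_iota. Qed.

Lemma ndoubles_blocks_of s c : ndoubles (blocks_of s c) = count (pred1 2%N) c.
Proof. by elim: c s => //= k c IH s; rewrite -(IH (s + k)%N) size_iota. Qed.

Definition parts12 (c : seq nat) : bool := all (fun k => (k == 1) || (k == 2))%N c.

Lemma comps12_parts12 n c : c \in comps12 n -> parts12 c.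
Proof.
move: c; suff: (forall c, c \in comps12 n -> parts12 c) /\
                (forall c, c \in comps12 n.+1 -> parts12 c) by case.
elim: n => [|n [IHn IHn1]]; first by split => c; rewrite /= inE => /eqP ->.
split=> // c; rewrite [comps12 _]/= mem_cat => /orP [] /mapP [d d_in ->] /=.
- exact: IHn1.
- exact: IHn.
Qed.

Lemma parts12_pos c : parts12 c -> all (fun k => 0 < k)%N c.
Proof. by elim: c => //= k c IH /andP [/orP [] /eqP -> /IH ->]. Qed.

Lemma parts12_size c :
  parts12 c -> size c = (count (pred1 1%N) c + count (pred1 2%N) c)%N.
Proof. by elim: c => //= k c IH /andP [/orP [] /eqP -> /IH ->] /=; rewrite ?addnS. Qed.

Local Open Scope ring_scope.

Definition comp_weight (R : comRingType) (c : seq nat) (x y q : R) : R :=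
  x ^+ count (pred1 1%N) c * y ^+ count (pred1 2%N) c * q ^+ rb_comp c.

Lemma F_comps12 (R : comRingType) n (x y q : R) :
  F n x y q = \sum_(c <- comps12 n) comp_weight c x y q.
Proof.
rewrite /F /layered big_map big_seq [RHS]big_seq; apply: eq_bigr => c c_in.
have c12 := comps12_parts12 c_in.
by rewrite /comp_weight nsingles_blocks_of ndoubles_blocks_of
           rb_blocks_of // parts12_pos.
Qed.

Lemma comp_weight_cons1 (R : comRingType) c (x y q : R) : parts12 c ->
  comp_weight (1%N :: c) x y q = x * comp_weight c (x * q) (y * q) q.
Proof.
move=> c12; rewrite /comp_weight /= parts12_size // add1n add0n mul1n.
by rewrite !exprMn exprS !exprD; ring.
Qed.

Lemma comp_weight_cons2 (R : comRingType) c (x y q : R) : parts12 c ->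
  comp_weight (2%N :: c) x y q = y * comp_weight c (x * q ^+ 2) (y * q ^+ 2) q.
Proof.
move=> c12; rewrite /comp_weight /= parts12_size // add1n add0n.
by rewrite !exprMn exprS mulnDr !exprD; ring.
Qed.

Lemma F_0 (R : comRingType) (x y q : R) : F 0 x y q = 1.
Proof. by rewrite F_comps12 /= big_seq1 /comp_weight /= !expr0 !mulr1. Qed.

Lemma F_1 (R : comRingType) (x y q : R) : F 1 x y q = x.
Proof. by rewrite F_comps12 /= big_seq1 /comp_weight /= expr1 !expr0 !mulr1. Qed.

Lemma F_rec (R : comRingType) n (x y q : R) :
  F n.+2 x y q = x * F n.+1 (x * q) (y * q) q + y * F n (x * q ^+ 2) (y * q ^+ 2) q.
Proof.
rewrite !F_comps12.
have -> : comps12 n.+2 =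
  [seq 1%N :: c | c <- comps12 n.+1] ++ [seq 2%N :: c | c <- comps12 n] by [].
rewrite big_cat !big_map !big_distrr.
congr (_ + _); rewrite big_seq [RHS]big_seq; apply: eq_bigr => c c_in.
- exact: comp_weight_cons1 (comps12_parts12 c_in).
- exact: comp_weight_cons2 (comps12_parts12 c_in).
Qed.

Section ShiftedFamily.
Variables (R : comRingType) (x y q : R).

Definition G (a n : nat) : R := F n (x * q ^+ a) (y * q ^+ a) q.

Lemma G_0 a : G a 0 = 1. Proof. exact: F_0. Qed.
Lemma G_1 a : G a 1 = x * q ^+ a. Proof. exact: F_1. Qed.

Lemma G_rec a n : G a n.+2 = x * q ^+ a * G a.+1 n.+1 + y * q ^+ a * G a.+2 n.
Proof. by rewrite /G F_rec -!mulrA -!exprSr -!exprD !addn2. Qed.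

(* Cutting between positions m+1 and m+2: either no block straddles the cut,
   or the double block {m+1, m+2} does. *)
Lemma G_concat m a k :
  G a (m.+1 + k.+1) =
  G a m.+1 * G (a + m.+1) k.+1 + G a m * (y * q ^+ (a + m)) * G (a + m.+2) k.
Proof.
elim/ltn_ind: m a => -[|[|m]] IH a.
- by rewrite add1n G_rec G_1 G_0 addn0 addn1 addn2 mul1r.
- rewrite !addSn add0n G_rec (G_rec a.+1) (G_rec a 0) !G_1 !G_0.
  rewrite !addn1 !addn2 !addn3 !exprS; ring.
- have -> : (m.+3 + k.+1 = (m.+1 + k.+1).+2)%N by rewrite !addSn.
  rewrite G_rec -addSn (IH m.+1) // (IH m) // (G_rec a m.+1) (G_rec a m).
  rewrite !addSn !addnS !exprS !exprD; ring.
Qed.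

(* The theorem for the family G, with m and n shifted down by one: expand
   F_{m+2} by cutting after position m+1, expand F_{m+n+3} by the same cut,
   and expand the remaining G_{m+1}(n+2) by the recurrence. *)
Lemma G_product m n :
  G 0 m.+2 * G m.+1 n.+2 =
  x * q ^+ m.+1 * G 0 (m.+1 + n.+1).+1
  + y ^+ 2 * q ^+ (2 * m.+1 - 1) * G 0 m * G (m.+1 + 2) n.
Proof.
have cut_end := G_concat m 0 0.
have cut_mid := G_concat m 0 n.+1.
rewrite !add0n addn1 G_1 G_0 mulr1 in cut_end; rewrite !add0n in cut_mid.
rewrite -addnS cut_end cut_mid (G_rec m.+1 n) addn2.
have -> : (2 * m.+1 - 1 = m + m.+1)%N by lia.
rewrite exprD; ring.
Qed.

End ShiftedFamily.

Theorem theorem4p4 (R : comRingType) (m n : nat) (x y q : R) :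
  (1 <= m)%N -> (1 <= n)%N ->
  F m.+1 x y q * F n.+1 (x * q ^+ m) (y * q ^+ m) q =
  x * q ^+ m * F (m + n).+1 x y q
  + y ^+ 2 * q ^+ (2 * m - 1) * F (m - 1) x y q
    * F (n - 1) (x * q ^+ (m + 2)) (y * q ^+ (m + 2)) q.
Proof.
case: m => // m _; case: n => // n _.
have G_unshifted k : F k x y q = G x y q 0 k by rewrite /G expr0 !mulr1.
rewrite !G_unshifted (subn1 m.+1) (subn1 n.+1) !succnK.
by have := G_product x y q m n; rewrite /G.
Qed.
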